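(* For every fixed nonnegative integer $k$, \[ \lim_{n\to\infty}\frac{\gamma_{2t}(K_n\Box K_{n+k})}{n}=\frac32. \]
   Context: For a graph $G=(V,E)$, a set $S\subseteq V$ is a total $2$-dominating set if every vertex of $V$ (including those in $S$) is adjacent to at least $2$ vertices of $S$; $\gamma_{2t}(G)$ is the minimum cardinality of such a set. $G\Box H$ denotes the Cartesian product: vertex set $V(G)\times V(H)$, with $(u_1,v_1)\sim(u_2,v_2)$ iff either $u_1=u_2$ and $v_1\sim v_2$, or $v_1=v_2$ and $u_1\sim u_2$. $K_n$ is the complete graph on $n$ vertices. *)

From HB Require Import structures.
From mathcomp Require Import all_boot all_order all_algebra.
Set Implicit Arguments. Unset Strict Implicit. Unset Printing Implicit Defensive.
Import Order.TTheory GRing.Theory Num.Theory.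

Definition complete_rel (n : nat) : rel 'I_n := fun i j => i != j.

Definition cart_rel (T1 T2 : finType) (e1 : rel T1) (e2 : rel T2) : rel (T1 * T2) :=
  fun x y => ((x.1 == y.1) && e2 x.2 y.2) || ((x.2 == y.2) && e1 x.1 y.1).

Definition total2dom (T : finType) (e : rel T) (S : {set T}) : bool :=
  [forall v : T, 2 <= #|[set u in S | e v u]|].

(* gamma_{2t}: minimum cardinality of a total 2-dominating set
   (defaults to #|T|.+1 when no such set exists). *)
Definition gamma2t (T : finType) (e : rel T) : nat :=
  \big[minn/#|T|.+1]_(S : {set T} | total2dom e S) #|S|.

Definition gamma2t_KK (n m : nat) : nat :=
  gamma2t (cart_rel (@complete_rel n) (@complete_rel m)).

From HB Require Import structures.
From mathcomp Require Import all_boot all_order all_algebra.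
From mathcomp Require Import zify ring lra.
Set Implicit Arguments. Unset Strict Implicit. Unset Printing Implicit Defensive.
Import Order.TTheory GRing.Theory Num.Theory.

(* Lower bound: let S be a total 2-dominating set of K_n [] K_m, n <= m.  If a
   row of the n x m grid misses S, every vertex of that row has its two
   S-neighbours in its own column, so every column meets S at least twice and
   |S| >= 2m; similarly for an empty column.  Otherwise every row and column
   meets S, and every v in S sees at least two other vertices of S in its row
   and column, i.e. r(v) + c(v) >= 4 for the numbers r(v), c(v) of vertices
   of S in its row and column.  Discharging with the weight w(1) = 6,
   w(2) = 3, w(r) = 2 (r >= 3), each row and each column collects at least 6
   while each vertex of S hands out w(r(v)) + w(c(v)) <= 8, whence
   6(n + m) <= 8|S| and |S| >= 3n/2.
   Upper bound: split the first 4q rows and columns (q = n/4) into diagonal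
   4 x 4 blocks; in each block take the three cells below and the three cells
   to the right of the corner cell (6 = 3/2 * 4 cells), and send every
   remaining row and column to a cell of the corner column, resp. row, of the
   first block.  This gives |S| <= 2n + k - 2q <= 3n/2 + k + 3/2. *)

Local Notation rook n m := (cart_rel (@complete_rel n) (@complete_rel m)).

Lemma rook_adjE n m (v u : 'I_n * 'I_m) :
  rook n m v u = (u != v) && ((u.1 == v.1) || (u.2 == v.2)).
Proof.
move: v u => [i j] [i' j']; rewrite /cart_rel /complete_rel /=.
by rewrite xpair_eqE (eq_sym i') (eq_sym j'); case: (i == i'); case: (j == j').
Qed.

Lemma gamma2t_le (T : finType) (e : rel T) (S : {set T}) :
  total2dom e S -> gamma2t e <= #|S|.
Proof.
move=> domS; rewrite /gamma2t; have : S \in index_enum {set T} := mem_index_enum S.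
elim: (index_enum _) => //= S' r IH; rewrite in_cons big_cons.
case/predU1P => [<-|/IH le_rS]; first by rewrite domS geq_minl.
by case: ifP => // _; apply: leq_trans (geq_minr _ _) le_rS.
Qed.

Lemma two_neighbours_le (T : finType) (e : rel T) (S : {set T}) v u1 u2 :
  u1 \in S -> u2 \in S -> u1 != u2 -> e v u1 -> e v u2 ->
  2 <= #|[set u in S | e v u]|.
Proof.
move=> u1S u2S u12 vu1 vu2; have <- : #|[set u1; u2]| = 2 by rewrite cards2 u12.
by apply/subset_leq_card/subsetP => u /set2P[]->; rewrite inE ?u1S ?u2S ?vu1 ?vu2.
Qed.

Definition weight r := if r == 1 then 6 else if r == 2 then 3 else 2.

Lemma weight_mul r : 0 < r -> 6 <= r * weight r.
Proof. by case: r => [|[|[|r]]] // _; rewrite /weight /=; lia. Qed.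

Lemma weight_add r c : 0 < r -> 0 < c -> 4 <= r + c -> weight r + weight c <= 8.
Proof. by rewrite /weight; case: r => [|[|[|r]]]; case: c => [|[|[|c]]]. Qed.

Section Fibres.
Variables (T I : finType) (p : T -> I) (S : {set T}).

Definition fibre (i : I) := [set s in S | p s == i].

Lemma card_fibres : #|S| = \sum_i #|fibre i|.
Proof.
rewrite -sum1_card (partition_big p xpredT) //=.
by apply: eq_bigr => i _; rewrite -sum1_card; apply: eq_bigl => s; rewrite inE.
Qed.

Lemma fibres_lower c : (forall i, c <= #|fibre i|) -> c * #|I| <= #|S|.
Proof.
by move=> c_le; rewrite card_fibres mulnC -sum_nat_const; apply: leq_sum.
Qed.

Lemma sum_weight_fibres : (forall i, 0 < #|fibre i|) ->
  6 * #|I| <= \sum_(s in S) weight #|fibre (p s)|.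
Proof.
move=> fibre_gt0; rewrite (partition_big p xpredT) //= mulnC -sum_nat_const.
apply: leq_sum => i _; rewrite (eq_bigr (fun=> weight #|fibre i|)); last first.
  by move=> s /andP[_ /eqP->].
rewrite sum_nat_const (eq_card (B := fibre i)) ?weight_mul // => s.
by rewrite !inE.
Qed.

End Fibres.

Section LowerBound.
Variables (n m : nat) (S : {set 'I_n * 'I_m}).
Hypothesis domS : total2dom (rook n m) S.
Local Notation row := (fibre fst S).
Local Notation col := (fibre snd S).

Lemma neighbours_in_lines v : 2 <= #|row v.1 :\ v| + #|col v.2 :\ v|.
Proof.
apply: leq_trans (leq_card_setU _ _).1; move/forallP: domS => /(_ v).
move/leq_trans; apply; apply/subset_leq_card/subsetP => u.
rewrite !inE rook_adjE => /andP[uS /andP[-> /orP[]->]]; by rewrite uS ?orbT.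
Qed.

Lemma lines_ge4 v : v \in S -> 4 <= #|row v.1| + #|col v.2|.
Proof.
move=> vS; have := neighbours_in_lines v.
rewrite (cardsD1 v (row v.1)) (cardsD1 v (col v.2)) !inE vS !eqxx.
by rewrite addnACA add2n !ltnS.
Qed.

Lemma cols_full_of_empty_row i : row i = set0 -> forall j, 2 <= #|col j|.
Proof.
move=> row0 j; have := neighbours_in_lines (i, j); rewrite /= row0 set0D cards0.
by move/leq_trans; apply; rewrite subset_leq_card ?subD1set.
Qed.

Lemma rows_full_of_empty_col j : col j = set0 -> forall i, 2 <= #|row i|.
Proof.
move=> col0 i; have := neighbours_in_lines (i, j); rewrite /= col0 set0D cards0.
by rewrite addn0 => /leq_trans; apply; rewrite subset_leq_card ?subD1set.
Qed.

Lemma rook_total2dom_lower : n <= m -> 3 * n <= 2 * #|S|.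
Proof.
move=> le_nm.
have [i /eqP row0 | rows_ne] := pickP (fun i => row i == set0).
  have : 2 * m <= #|S|.
    rewrite -[m in 2 * m]card_ord.
    exact/fibres_lower/cols_full_of_empty_row/row0.
  lia.
have [j /eqP col0 | cols_ne] := pickP (fun j => col j == set0).
  have : 2 * n <= #|S|.
    rewrite -[n in 2 * n]card_ord.
    exact/fibres_lower/rows_full_of_empty_col/col0.
  lia.
have row_gt0 i : 0 < #|row i| by rewrite card_gt0 rows_ne.
have col_gt0 j : 0 < #|col j| by rewrite card_gt0 cols_ne.
have rows_weight : 6 * n <= \sum_(s in S) weight #|row s.1|.
  by rewrite -[n in 6 * n]card_ord; apply: sum_weight_fibres.
have cols_weight : 6 * m <= \sum_(s in S) weight #|col s.2|.
  by rewrite -[m in 6 * m]card_ord; apply: sum_weight_fibres.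
have : \sum_(s in S) weight #|row s.1| + \sum_(s in S) weight #|col s.2|
         <= 8 * #|S|.
  rewrite -big_split mulnC -sum_nat_const; apply: leq_sum => s sS.
  exact: weight_add (row_gt0 _) (col_gt0 _) (lines_ge4 sS).
lia.
Qed.

End LowerBound.

Lemma gamma2t_KK_lower n m : n <= m -> 3 * n <= 2 * gamma2t_KK n m.
Proof.
move=> le_nm; apply: (big_ind (fun g => 3 * n <= 2 * g)) => [||S domS];
  last exact: rook_total2dom_lower.
- by rewrite card_prod !card_ord; nia.
- by move=> x y; rewrite minnMr leq_min => -> ->.
Qed.

Lemma two_offsets a x : exists d1 d2,
  [/\ d1 != d2, a + d1 != x, a + d2 != x, 0 < d1 < 4 & 0 < d2 < 4].
Proof.
have [->|ne1] := eqVneq x (a + 1); first by exists 2, 3; split; lia.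
have [->|ne3] := eqVneq x (a + 3); first by exists 1, 2; split; lia.
by exists 1, 3; split; rewrite 1?eq_sym.
Qed.

(* The indices below 4q are cut into blocks {4b, ..., 4b + 3} whose least
   element is the anchor; larger indices are attached to the block of 0.  The
   cell (x, y) is an arm of x when x is not an anchor and y is its anchor. *)
Section Blocks.
Variable q : nat.
Hypothesis q_gt0 : 0 < q.

Definition is_anchor x := (x < 4 * q) && (4 %| x).
Definition anchor x := if x < 4 * q then 4 * (x %/ 4) else 0.
Definition arm x y := ~~ is_anchor x && (y == anchor x).

Lemma anchor_id x : is_anchor x -> anchor x = x.
Proof. by rewrite /is_anchor /anchor => /andP[-> /dvdnP[c ->]]; lia. Qed.

Lemma anchor_block x d : 0 < d < 4 ->
  [/\ anchor x + d < 4 * q, ~~ is_anchor (anchor x + d)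
    & anchor (anchor x + d) = anchor x].
Proof.
move=> d_lt4; have lt_q : anchor x + d < 4 * q by rewrite /anchor; case: ifP; lia.
by split; rewrite // /is_anchor /anchor lt_q /=; case: ifP; lia.
Qed.

Lemma card_non_anchors K :
  4 * q <= K -> #|[set x : 'I_K | ~~ is_anchor x]| <= K - q.
Proof.
move=> qK; have anchor_lt (b : 'I_q) : 4 * b < K by have := ltn_ord b; lia.
have : #|[set Ordinal (anchor_lt b) | b : 'I_q]| <= #|[set x : 'I_K | is_anchor x]|.
  apply/subset_leq_card/subsetP => _ /imsetP[b _ ->].
  by rewrite inE /is_anchor /= ltn_pmul2l ?ltn_ord ?dvdn_mulr.
rewrite card_imset ?card_ord; last first.
  by move=> b b' /(congr1 val) /= /eqP; rewrite eqn_pmul2l // => /eqP/val_inj.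
have := cardsC [set x : 'I_K | is_anchor x]; rewrite card_ord.
have -> : ~: [set x : 'I_K | is_anchor x] = [set x : 'I_K | ~~ is_anchor x].
  by apply/setP => x; rewrite !inE.
lia.
Qed.

Section Construction.
Variables n m : nat.
Hypotheses (qn : 4 * q <= n) (nm : n <= m).

Definition rook_dom : {set 'I_n * 'I_m} :=
  [set v : 'I_n * 'I_m | arm v.1 v.2 || arm v.2 v.1].

Lemma rook_dom_row (i : 'I_n) : exists j : 'I_m, (i, j) \in rook_dom.
Proof.
have [anc_i|non_i] := boolP (is_anchor i).
  have [lt_q non1 anc1] := anchor_block i (isT : 0 < 1 < 4).
  have lt_m : anchor i + 1 < m by lia.
  by exists (Ordinal lt_m); rewrite inE /arm /= non1 anc1 anchor_id ?eqxx ?orbT.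
have lt_m : anchor i < m by have [] := anchor_block i (isT : 0 < 1 < 4); lia.
by exists (Ordinal lt_m); rewrite inE /arm /= non_i eqxx.
Qed.

Lemma rook_dom_col (j : 'I_m) : exists i : 'I_n, (i, j) \in rook_dom.
Proof.
have [anc_j|non_j] := boolP (is_anchor j).
  have [lt_q non1 anc1] := anchor_block j (isT : 0 < 1 < 4).
  have lt_n : anchor j + 1 < n by lia.
  by exists (Ordinal lt_n); rewrite inE /arm /= non1 anc1 anchor_id ?eqxx.
have lt_n : anchor j < n by have [] := anchor_block j (isT : 0 < 1 < 4); lia.
by exists (Ordinal lt_n); rewrite inE /arm /= non_j eqxx orbT.
Qed.

Lemma card_arms_fst : #|[set v : 'I_n * 'I_m | arm v.1 v.2]| <= n - q.
Proof.
rewrite -(card_in_imset (f := fst)); last first.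
  move=> [i j] [i' j']; rewrite !inE /= => /andP[_ /eqP ji] /andP[_ /eqP j'i'] ii'.
  by move: ji; rewrite ii' -j'i' => /ord_inj ->.
apply: leq_trans (card_non_anchors qn); apply/subset_leq_card/subsetP.
by move=> _ /imsetP[[i j] /[!inE] /andP[non_i _] ->].
Qed.

Lemma card_arms_snd : #|[set v : 'I_n * 'I_m | arm v.2 v.1]| <= m - q.
Proof.
rewrite -(card_in_imset (f := snd)); last first.
  move=> [i j] [i' j']; rewrite !inE /= => /andP[_ /eqP ij] /andP[_ /eqP i'j'] jj'.
  by move: ij; rewrite jj' -i'j' => /ord_inj ->.
apply: leq_trans (card_non_anchors (leq_trans qn nm)).
apply/subset_leq_card/subsetP.
by move=> _ /imsetP[[i j] /[!inE] /andP[non_j _] ->].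
Qed.

Lemma card_rook_dom : #|rook_dom| <= (n - q) + (m - q).
Proof.
have -> : rook_dom =
    [set v : 'I_n * 'I_m | arm v.1 v.2] :|: [set v : 'I_n * 'I_m | arm v.2 v.1].
  by apply/setP => v; rewrite !inE.
exact: leq_trans (leq_card_setU _ _).1 (leq_add card_arms_fst card_arms_snd).
Qed.

Lemma column_mates (i : 'I_n) (j : 'I_m) : arm i j ->
  2 <= #|[set u in rook_dom | rook n m (i, j) u]|.
Proof.
case/andP=> _ /eqP j_anc.
have [d1 [d2 [d12 ne1 ne2 d1_lt4 d2_lt4]]] := two_offsets (anchor i) i.
have [lt1 non1 anc1] := anchor_block i d1_lt4.
have [lt2 non2 anc2] := anchor_block i d2_lt4.
have lt1n : anchor i + d1 < n by lia.
have lt2n : anchor i + d2 < n by lia.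
apply: (@two_neighbours_le _ _ _ _ (Ordinal lt1n, j) (Ordinal lt2n, j)).
- by rewrite inE /arm /= non1 anc1 j_anc eqxx.
- by rewrite inE /arm /= non2 anc2 j_anc eqxx.
- by rewrite xpair_eqE eqxx andbT -val_eqE /= eqn_add2l.
- by rewrite rook_adjE /= eqxx orbT andbT xpair_eqE eqxx andbT -val_eqE.
- by rewrite rook_adjE /= eqxx orbT andbT xpair_eqE eqxx andbT -val_eqE.
Qed.

Lemma row_mates (i : 'I_n) (j : 'I_m) : arm j i ->
  2 <= #|[set u in rook_dom | rook n m (i, j) u]|.
Proof.
case/andP=> _ /eqP i_anc.
have [d1 [d2 [d12 ne1 ne2 d1_lt4 d2_lt4]]] := two_offsets (anchor j) j.
have [lt1 non1 anc1] := anchor_block j d1_lt4.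
have [lt2 non2 anc2] := anchor_block j d2_lt4.
have lt1m : anchor j + d1 < m by lia.
have lt2m : anchor j + d2 < m by lia.
apply: (@two_neighbours_le _ _ _ _ (i, Ordinal lt1m) (i, Ordinal lt2m)).
- by rewrite inE /arm /= non1 anc1 i_anc eqxx orbT.
- by rewrite inE /arm /= non2 anc2 i_anc eqxx orbT.
- by rewrite xpair_eqE eqxx -val_eqE /= eqn_add2l.
- by rewrite rook_adjE /= eqxx andbT xpair_eqE eqxx -val_eqE.
- by rewrite rook_adjE /= eqxx andbT xpair_eqE eqxx -val_eqE.
Qed.

Lemma rook_dom_total2dom : total2dom (rook n m) rook_dom.
Proof.
apply/forallP => -[i j].
have [|v_out] := boolP ((i, j) \in rook_dom).
  by rewrite inE => /orP[/column_mates|/row_mates].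
have [j' row_ij'] := rook_dom_row i; have [i' col_i'j] := rook_dom_col j.
apply: (two_neighbours_le row_ij' col_i'j).
- by apply: contraNneq v_out => -[_ <-].
- by rewrite rook_adjE /= eqxx andbT; apply: contraNneq v_out => <-.
- by rewrite rook_adjE /= eqxx orbT andbT; apply: contraNneq v_out => <-.
Qed.

End Construction.
End Blocks.

Lemma gamma2t_KK_upper n k :
  4 <= n -> 2 * gamma2t_KK n (n + k) <= 3 * n + 2 * k + 3.
Proof.
move=> n_ge4; have q_gt0 : 0 < n %/ 4 by lia.
have qn : 4 * (n %/ 4) <= n by lia.
have nm : n <= n + k by rewrite leq_addr.
have := leq_trans (gamma2t_le (rook_dom_total2dom q_gt0 qn nm))
                  (card_rook_dom q_gt0 qn nm).
rewrite -(leq_pmul2l (isT : 0 < 2)) => /leq_trans; apply; lia.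
Qed.

Unset Implicit Arguments.
Local Open Scope ring_scope.

Lemma ratio_eventually_near_3_2 (R : archiRealFieldType) (g : nat -> nat)
    (c n0 : nat) (eps : R) :
  0 < eps -> (forall n, n0 <= n -> 3 * n <= 2 * g n <= 3 * n + c)%N ->
  exists N : nat, forall n : nat, (N <= n)%N -> `|(g n)%:R / n%:R - 3 / 2| < eps.
Proof.
move=> eps_gt0 g_bounds; set b := Num.bound (c%:R / eps).
exists (maxn n0.+1 b) => n; rewrite geq_max => /andP[n0n bn].
have /andP[lo hi] := g_bounds n (ltnW n0n).
have n_gt0 : 0 < n%:R :> R by rewrite ltr0n; lia.
have -> : (g n)%:R / n%:R - 3 / 2 = (2 * g n - 3 * n)%N%:R / (2 * n%:R) :> R.
  by rewrite natrB // !natrM; field; rewrite lt0r_neq0.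
rewrite ger0_norm ?divr_ge0 ?mulr_ge0 ?ler0n // ltr_pdivrMr ?mulr_gt0 //.
have c_lt : c%:R < n%:R * eps.
  rewrite -ltr_pdivrMr //; apply: lt_le_trans (archi_boundP _) _.
    by rewrite divr_ge0 ?ler0n ?ltW.
  by rewrite ler_nat.
have : (2 * g n - 3 * n)%N%:R <= c%:R :> R by rewrite ler_nat; lia.
nra.
Qed.

Theorem theorem17 (k : nat) (eps : rat) (heps : 0 < eps) :
  exists N : nat, forall n : nat, (N <= n)%N ->
    `| (gamma2t_KK n (n + k))%:R / n%:R - 3 / 2 | < eps.
Proof.
apply: (ratio_eventually_near_3_2 _ _ (2 * k + 3) 4 _ heps) => n n_ge4.
by rewrite gamma2t_KK_lower ?leq_addr // addnA gamma2t_KK_upper.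
Qed.
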